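(* Let $X$ be a (real or complex) Banach space, $S$ a Hausdorff topological space, and $J\colon X\to C^{b}(S)$ a nice embedding (see context). Then for every $T\in L(X)$ there is a scalar $\lambda$ with $|\lambda|=1$ such that $\lambda T$ satisfies the Daugavet equation $\|\mathrm{Id}+\lambda T\|=1+\|\lambda T\|$.
   Context: $C^{b}(S)$ denotes the sup-normed Banach space of bounded continuous scalar-valued functions on $S$, and $\delta_s$ the functional $f\mapsto f(s)$. A closed subspace $F$ of a Banach space $E$ is an $L$-summand if there is a projection $\Pi$ of $E$ onto $F$ with $\|\xi\|=\|\Pi\xi\|+\|\xi-\Pi\xi\|$ for all $\xi\in E$. A linear map $J\colon X\to C^b(S)$ is a nice embedding if $J$ is an isometry and for every $s\in S$: (N1) $p_s:=J^*(\delta_s)$ satisfies $\|p_s\|=1$; (N2) $\operatorname{lin}\{p_s\}$ is an $L$-summand in $X^*$. $L(X)$ denotes the bounded linear operators on $X$. *)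

(* Scalars: K : numFieldType (instantiated with a
   realType R for real Banach spaces and with R[i] = complex R for complex
   Banach spaces).  Banach space over K : completeNormedModType K. *)
From mathcomp Require Import all_boot all_algebra.
From mathcomp Require Import all_classical all_reals all_analysis.
From mathcomp Require Export complex.
Export Num.Theory GRing.Theory.
Export numFieldNormedType.Exports.
Set Implicit Arguments.
Unset Strict Implicit.
Unset Printing Implicit Defensive.
Local Open Scope ring_scope.
Local Open Scope classical_set_scope.

Section Defs.
Variable K : numFieldType.

Definition is_sup (P : set K) (c : K) : Prop :=
  (forall v, P v -> v <= c) /\ (forall b, (forall v, P v -> v <= b) -> c <= b).

Variable X : normedModType K.

Definition lin_functional (f : X -> K) : Prop :=
  forall (a : K) (x y : X), f (a *: x + y) = a * f x + f y.

Definition in_dual (f : X -> K) : Prop :=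
  lin_functional f /\ exists M : K, forall x, `|f x| <= M * `|x|.

Definition dual_norm (f : X -> K) (c : K) : Prop :=
  is_sup [set v | exists x : X, `|x| <= 1 /\ v = `|f x|] c.

Definition bounded_operator (T : X -> X) : Prop :=
  (forall (a : K) (x y : X), T (a *: x + y) = a *: T x + T y) /\
  exists M : K, forall x, `|T x| <= M * `|x|.

Definition op_norm (T : X -> X) (c : K) : Prop :=
  is_sup [set v | exists x : X, `|x| <= 1 /\ v = `|T x|] c.

Definition Daugavet_eq (T : X -> X) : Prop :=
  exists c d : K, op_norm (fun x => x + T x) c /\ op_norm T d /\ c = 1 + d.

Definition L_summand_line (p : X -> K) : Prop :=
  exists Pi : (X -> K) -> (X -> K),
    (forall xi, in_dual xi -> in_dual (Pi xi)) /\
    [/\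
        forall (a : K) xi eta, in_dual xi -> in_dual eta ->
          Pi (fun x => a * xi x + eta x) = (fun x => a * Pi xi x + Pi eta x),
        forall xi, in_dual xi -> Pi (Pi xi) = Pi xi,
        forall xi, in_dual xi -> exists a : K, Pi xi = (fun x => a * p x),
        forall a : K, exists xi, in_dual xi /\ Pi xi = (fun x => a * p x) &
        forall xi, in_dual xi -> forall n1 n2 n3 : K,
          dual_norm xi n1 -> dual_norm (Pi xi) n2 ->
          dual_norm (fun x => xi x - Pi xi x) n3 -> n1 = n2 + n3].

Variable S : topologicalType.

(* J : X -> C^b(S) is a nice embedding.  J x is a continuous function
   S -> K; isometry means ||x|| = sup_s |J x s| (which also gives
   boundedness of J x); p_s := J^*(delta_s) = (x |-> J x s). *)
Definition nice_embedding (J : X -> (S -> K)) : Prop :=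
  [/\ forall (a : K) (x y : X) (s : S), J (a *: x + y) s = a * J x s + J y s,
      forall x, continuous (J x),
      forall x, is_sup [set v | exists s : S, v = `|J x s|] `|x|,
      forall s : S, dual_norm (fun x => J x s) 1 &
      forall s : S, L_summand_line (fun x => J x s)].

End Defs.

Definition cor2p2_over (K : numFieldType) : Prop :=
  forall (X : completeNormedModType K) (S : topologicalType),
    hausdorff_space S -> [set: S] !=set0 ->
    forall J : X -> (S -> K), nice_embedding J ->
    forall T : X -> X, bounded_operator T ->
    exists lam : K, `|lam| = 1 /\ Daugavet_eq (fun x => lam *: T x).

From mathcomp Require Import all_boot all_algebra.
From mathcomp Require Import all_classical all_reals all_analysis.
From mathcomp Require Import complex.
From mathcomp Require Import ring lra.
Import order.Order.TTheory GRing.Theory Num.Theory.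
Set Implicit Arguments.
Unset Strict Implicit.
Unset Printing Implicit Defensive.

Local Open Scope ring_scope.
Local Open Scope classical_set_scope.

(* For s in S let p_s := J^*(delta_s).  Since lin{p_s} is an L-summand and
   ||p_s|| = 1, every functional psi splits as a p_s + eta with
   ||psi|| = |a| + ||eta||; for the unimodular lam with lam a = |a| this gives
   ||p_s + lam psi|| = 1 + ||psi||.  Apply this to psi = p_s o T, with x and s
   chosen so that |J(Tx)(s)| is close to ||T||: as J is an isometry,
   ||Id + lam T|| >= ||p_s + lam (p_s o T)||, which is close to 1 + ||T||.
   Hence the Lipschitz function lam |-> ||Id + lam T|| has supremum 1 + ||T||
   on the scalar unit sphere, which is compact, so the supremum is attained;
   the triangle inequality gives the other bound. *)

(* Scalar fields are only numFieldTypes, so the existence of the operator and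
   dual norms is an assumption on K; it holds for R and R[i]. *)
Definition has_nonneg_sups (K : numFieldType) : Prop :=
  forall (P : set K) (b : K), P 0 -> (forall v, P v -> 0 <= v <= b) ->
  exists c, is_sup P c.

Definition unit_sphere_sup_attained (K : numFieldType) : Prop :=
  forall (f : K -> K) (L M : K), 0 <= L -> 0 <= M -> (forall lam, 0 <= f lam) ->
  (forall lam mu, f lam <= f mu + `|lam - mu| * L) ->
  (forall e, 0 < e -> exists2 lam, `|lam| = 1 & M - e < f lam) ->
  exists2 lam, `|lam| = 1 & M <= f lam.

Section UnitBallSup.
Variables (K : numFieldType) (X : normedModType K).

Definition unit_ball_sup (V : normedZmodType K) (g : X -> V) (c : K) : Prop :=
  is_sup [set v | exists x : X, `|x| <= 1 /\ v = `|g x|] c.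

Lemma is_sup_approx (P : set K) c e : is_sup P c -> 0 <= c -> 0 < e ->
  (forall v, P v -> 0 <= v) -> exists2 v, P v & c - e < v.
Proof.
move=> [_ least] c0 e0 P_ge0; apply: contrapT => /forall2NP no_v.
suff : c <= c - e by rewrite lerBDr gerDl => /(lt_le_trans e0); rewrite ltxx.
apply: least => v Pv.
have vR := ger0_real (P_ge0 v Pv).
have ceR : c - e \is Num.real := rpredB (ger0_real c0) (gtr0_real e0).
rewrite real_leNgt //; apply/negP => lt_v; by case: (no_v v).
Qed.

Variables (V W : normedZmodType K).
Implicit Types (g : X -> V) (h : X -> W).

Lemma unit_ball_sup_ub g c x : unit_ball_sup g c -> `|x| <= 1 -> `|g x| <= c.
Proof. by move=> [ub _] x1; apply: ub; exists x. Qed.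

Lemma unit_ball_sup_le g c b : unit_ball_sup g c ->
  (forall x, `|x| <= 1 -> `|g x| <= b) -> c <= b.
Proof. by move=> [_ least] gb; apply: least => _ [x [x1 ->]]; apply: gb. Qed.

Lemma unit_ball_sup_ge0 g c : unit_ball_sup g c -> 0 <= c.
Proof.
by move=> gc; apply: le_trans (normr_ge0 (g 0)) (unit_ball_sup_ub gc _); rewrite normr0.
Qed.

Lemma unit_ball_sup_approx g c e : unit_ball_sup g c -> 0 < e ->
  exists2 x, `|x| <= 1 & c - e < `|g x|.
Proof.
move=> gc e0.
have [|_ [x [x1 ->]] lt_v] := is_sup_approx gc (unit_ball_sup_ge0 gc) e0.
  by move=> _ [x [_ ->]].
by exists x.
Qed.

Lemma unit_ball_sup_scale g h k c : 0 <= k ->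
  (forall x, `|h x| = k * `|g x|) -> unit_ball_sup g c -> unit_ball_sup h (k * c).
Proof.
move=> k0 hg gc; split=> [_ [x [x1 ->]]|b hb].
  by rewrite hg ler_wpM2l // (unit_ball_sup_ub gc x1).
have b0 : 0 <= b.
  by apply: le_trans (normr_ge0 (h 0)) _; apply: hb; exists 0; rewrite normr0 ler01.
have [->|kn0] := eqVneq k 0; first by rewrite mul0r.
have kp : 0 < k by rewrite lt_def kn0 k0.
rewrite -ler_pdivlMl //; apply: (unit_ball_sup_le gc) => x x1.
by rewrite ler_pdivlMl // -hg; apply: hb; exists x.
Qed.

Lemma le_norm_of_le_mul (M a b : K) :
  0 <= a -> a <= M * b -> 0 <= b <= 1 -> a <= `|M|.
Proof.
move=> a0 aM /andP[b0 b1].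
have [b00|bn0] := eqVneq b 0.
  by apply: le_trans aM _; rewrite b00 mulr0.
have bp : 0 < b by rewrite lt_def bn0 b0.
have M0 : 0 <= M by rewrite -(pmulr_lge0 M bp); exact: le_trans aM.
by rewrite ger0_norm //; apply: le_trans aM _; rewrite ler_piMr.
Qed.

Lemma unit_ball_bounded g M : (forall x, `|g x| <= M * `|x|) ->
  forall x, `|x| <= 1 -> `|g x| <= `|M|.
Proof. by move=> gM x x1; apply: (le_norm_of_le_mul _ (gM x)); rewrite ?normr_ge0. Qed.

Hypothesis sups : has_nonneg_sups K.

Lemma unit_ball_sup_exists g B : g 0 = 0 ->
  (forall x, `|x| <= 1 -> `|g x| <= B) -> exists c, unit_ball_sup g c.
Proof.
move=> g0 gB; apply: sups; first by exists 0; rewrite g0 !normr0 ler01.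
by move=> _ [x [x1 ->]]; rewrite normr_ge0; exact: gB.
Qed.

End UnitBallSup.

Section Dual.
Variables (K : numFieldType) (X : normedModType K).
Hypothesis sups : has_nonneg_sups K.
Implicit Types (f p psi : X -> K).

Lemma lin_functional0 f : lin_functional f -> f 0 = 0.
Proof.
by move=> lf; have := lf (-1) 0 0; rewrite scaleN1r oppr0 addr0 mulN1r addNr.
Qed.

Lemma in_dual_comb (b : K) f g : in_dual f -> in_dual g ->
  in_dual (fun x => b * f x + g x).
Proof.
move=> [lf [Mf fM]] [lg [Mg gM]]; split=> [a x y|].
  by rewrite lf lg; ring.
exists (`|b| * Mf + Mg) => x; rewrite mulrDl -mulrA.
by rewrite (le_trans (ler_normD _ _)) // normrM lerD // ler_wpM2l.
Qed.

Lemma dual_norm_exists f : in_dual f -> exists n, dual_norm f n.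
Proof.
move=> [lf [M fM]]; apply: (unit_ball_sup_exists sups (B := `|M|)).
  exact: lin_functional0.
exact: unit_ball_bounded.
Qed.

Lemma dual_norm_scale f (a : K) n :
  dual_norm f n -> dual_norm (fun x => a * f x) (`|a| * n).
Proof. by apply: unit_ball_sup_scale => // x; rewrite normrM. Qed.

Lemma L_summand_norm_add_unimodular p psi :
  in_dual p -> dual_norm p 1 -> L_summand_line p -> in_dual psi ->
  exists2 lam : K, `|lam| = 1 &
    forall n, dual_norm psi n -> dual_norm (fun x => lam * psi x + p x) (1 + n).
Proof.
move=> pd p1 [Pi [_ [Plin Pidem Prange Ponto Pnorm]]] psid.
have Pp : Pi p = p.
  have [xi [xid Pxi]] := Ponto 1.
  have -> : p = Pi xi by rewrite Pxi; apply/funext => x; rewrite mul1r.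
  exact: Pidem.
have [a Pa] := Prange _ psid.
pose lam : K := if a == 0 then 1 else `|a| / a.
have [lam1 lama] : `|lam| = 1 /\ lam * a = `|a|.
  rewrite /lam; case: eqP => [->|/eqP an0]; first by rewrite normr1 mul1r normr0.
  by rewrite normrM normfV normr_id divff ?normr_eq0 // divfK.
have pa : dual_norm (fun x => a * p x) `|a|.
  by rewrite -[`|a|]mulr1; apply: dual_norm_scale.
have [m etam] : exists m, dual_norm (fun x => psi x - a * p x) m.
  apply: dual_norm_exists.
  have -> : (fun x => psi x - a * p x) = (fun x => - a * p x + psi x).
    by apply/funext => x; ring.
  exact: in_dual_comb.
exists lam => // n psin.
have nE : n = `|a| + m by apply: (Pnorm _ psid) => //; rewrite Pa.
pose xi x := lam * psi x + p x.
have xid : in_dual xi by apply: in_dual_comb.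
have Pxi : Pi xi = fun x => (lam * a + 1) * p x.
  rewrite (Plin lam psi p psid pd) Pa Pp; apply/funext => x; ring.
have [c xic] := dual_norm_exists xid.
have cE : c = `|lam * a + 1| * 1 + `|lam| * m.
  apply: (Pnorm _ xid) => //; rewrite Pxi; first exact: dual_norm_scale.
  have -> : (fun x => xi x - (lam * a + 1) * p x) = (fun x => lam * (psi x - a * p x)).
    by apply/funext => x; rewrite /xi; ring.
  exact: dual_norm_scale.
have -> : 1 + n = c.
  by rewrite cE lama lam1 mul1r mulr1 ger0_norm ?addr_ge0 // nE addrCA addrA.
exact: xic.
Qed.

End Dual.

Section Operators.
Variables (K : numFieldType) (X : normedModType K).
Hypothesis sups : has_nonneg_sups K.
Variable T : X -> X.
Hypothesis T_bounded : bounded_operator T.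

Lemma bounded_operator0 : T 0 = 0.
Proof.
have := T_bounded.1 (-1) 0 0.
by rewrite !scaleN1r oppr0 addr0 addNr.
Qed.

Lemma bounded_operator_unit_ball : exists B, forall x, `|x| <= 1 -> `|T x| <= B.
Proof. by have [_ [M TM]] := T_bounded; exists `|M|; apply: unit_ball_bounded. Qed.

Lemma op_norm_exists : exists N, op_norm T N.
Proof.
have [B TB] := bounded_operator_unit_ball.
exact: (unit_ball_sup_exists sups bounded_operator0 TB).
Qed.

Lemma op_norm_addZ_exists (mu : K) : exists c, op_norm (fun x => x + mu *: T x) c.
Proof.
have [B TB] := bounded_operator_unit_ball.
apply: (unit_ball_sup_exists sups (B := 1 + `|mu| * B)).
  by rewrite bounded_operator0 scaler0 addr0.
move=> x x1; rewrite (le_trans (ler_normD _ _)) // normrZ.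
by rewrite lerD // ler_wpM2l // TB.
Qed.

Variable N : K.
Hypothesis TN : op_norm T N.

Lemma op_norm_addZ_lipschitz (lam mu : K) c c' :
  op_norm (fun x => x + lam *: T x) c -> op_norm (fun x => x + mu *: T x) c' ->
  c <= c' + `|lam - mu| * N.
Proof.
move=> lamc muc; apply: (unit_ball_sup_le lamc) => x x1.
have -> : x + lam *: T x = (x + mu *: T x) + (lam - mu) *: T x.
  by rewrite scalerBl -addrA (addrC (mu *: T x)) subrK.
rewrite (le_trans (ler_normD _ _)) // lerD ?(unit_ball_sup_ub muc) //.
by rewrite normrZ ler_wpM2l // (unit_ball_sup_ub TN).
Qed.

Lemma op_norm_addZ_le (lam : K) c : `|lam| = 1 ->
  op_norm (fun x => x + lam *: T x) c -> c <= 1 + N.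
Proof.
move=> lam1 lamc; apply: (unit_ball_sup_le lamc) => x x1.
rewrite (le_trans (ler_normD _ _)) // normrZ lam1 mul1r.
by rewrite lerD // (unit_ball_sup_ub TN).
Qed.

Lemma op_norm_scaleZ (lam : K) : `|lam| = 1 -> op_norm (fun x => lam *: T x) N.
Proof.
move=> lam1; rewrite -[N]mul1r.
by apply: (unit_ball_sup_scale _ _ TN) => // x; rewrite normrZ lam1.
Qed.

Variables (S : topologicalType) (J : X -> S -> K).
Hypothesis J_nice : nice_embedding J.

Lemma nice_embedding_le x s : `|J x s| <= `|x|.
Proof. by case: J_nice => _ _ iso _ _; case: (iso x) => ub _; apply: ub; exists s. Qed.

Lemma nice_embedding_eval_in_dual s : in_dual (fun x => J x s).
Proof.
split=> [a x y|]; first by case: J_nice.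
by exists 1 => x; rewrite mul1r nice_embedding_le.
Qed.

Lemma nice_embedding_evalT_in_dual s : in_dual (fun x => J (T x) s).
Proof.
case: T_bounded => T_lin [M TM]; split=> [a x y|].
  by rewrite T_lin; case: J_nice.
by exists M => x; rewrite (le_trans (nice_embedding_le _ _)).
Qed.

Lemma op_norm_evalT_approx e : 0 < e ->
  exists x s, `|x| <= 1 /\ N - e < `|J (T x) s|.
Proof.
move=> e0; have e20 : 0 < e / 2 by rewrite divr_gt0.
have [x x1 lt_Tx] := unit_ball_sup_approx TN e20.
case: J_nice => _ _ iso _ _.
have [|_ [s ->] lt_JTx] := is_sup_approx (iso (T x)) (normr_ge0 _) e20.
  by move=> _ [s ->].
exists x, s; split=> //; rewrite (lt_trans _ lt_JTx) //.
by rewrite [e in N - e]splitr opprD addrA ltrD2r.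
Qed.

Lemma op_norm_addZ_almost_Daugavet e : 0 < e ->
  exists2 lam : K, `|lam| = 1 &
    forall c, op_norm (fun x => x + lam *: T x) c -> 1 + N - e < c.
Proof.
move=> e0; have [x [s [x1 lt_JTx]]] := op_norm_evalT_approx e0.
have [_ _ _ p1 Lsum] := J_nice.
have [lam lam1 norm_add] := L_summand_norm_add_unimodular sups
  (nice_embedding_eval_in_dual s) (p1 s) (Lsum s) (nice_embedding_evalT_in_dual s).
exists lam => // c lamc.
have [n psin] := dual_norm_exists sups (nice_embedding_evalT_in_dual s).
have le_c : 1 + n <= c.
  apply: (unit_ball_sup_le (norm_add n psin)) => y y1.
  have <- : J (lam *: T y + y) s = lam * J (T y) s + J y s by case: J_nice.
  by rewrite (le_trans (nice_embedding_le _ _)) // addrC (unit_ball_sup_ub lamc).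
rewrite -addrA (lt_le_trans _ le_c) // ltrD2l (lt_le_trans lt_JTx) //.
exact: (unit_ball_sup_ub psin).
Qed.

End Operators.

Theorem nice_embedding_Daugavet (K : numFieldType) :
  has_nonneg_sups K -> unit_sphere_sup_attained K -> cor2p2_over K.
Proof.
move=> sups attained X S _ _ J J_nice T T_bounded.
have [N TN] := op_norm_exists sups T_bounded.
pose c mu := projT1 (cid (op_norm_addZ_exists sups T_bounded mu)).
have cP mu : op_norm (fun x => x + mu *: T x) (c mu) := projT2 (cid _).
have N0 := unit_ball_sup_ge0 TN.
have [lam lam1 le_c] : exists2 lam : K, `|lam| = 1 & 1 + N <= c lam.
  apply: (attained c N (1 + N) N0).
  - by rewrite addr_ge0.
  - by move=> mu; apply: unit_ball_sup_ge0 (cP mu).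
  - by move=> lam mu; apply: (op_norm_addZ_lipschitz TN (cP lam) (cP mu)).
  move=> e e0.
  have [lam lam1 gt_c] := op_norm_addZ_almost_Daugavet sups T_bounded TN J_nice e0.
  by exists lam => //; apply: gt_c.
exists lam; split=> //; exists (c lam), N; split=> //; split.
  exact: (op_norm_scaleZ TN lam1).
by apply/le_anti; rewrite le_c (op_norm_addZ_le TN lam1 (cP lam)).
Qed.

Lemma has_nonneg_sups_realType (R : realType) : has_nonneg_sups R.
Proof.
move=> P b P0 Pb; exists (sup P); split=> [v Pv|B PB].
  by apply: sup_upper_bound => //; split; [exists 0 | exists b => w /Pb /andP[]].
by apply: ge_sup => //; exists 0.
Qed.

Lemma unit_sphere_sup_attained_realField (R : realFieldType) :
  unit_sphere_sup_attained R.
Proof.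
move=> f _ M _ _ _ _ approx.
have [le_M1|lt_1] := lerP M (f 1); first by exists 1; rewrite ?normr1.
have [le_M2|lt_2] := lerP M (f (-1)); first by exists (-1); rewrite ?normrN1.
pose d := Num.min (M - f 1) (M - f (-1)).
have [d1 d2] : d <= M - f 1 /\ d <= M - f (-1) by rewrite !ge_min !lexx orbT.
have [|lam /eqP] := approx d; first by rewrite lt_min !subr_gt0 lt_1 lt_2.
by rewrite eqr_norml ler01 andbT => /orP[] /eqP ->; lra.
Qed.

Section Complex.
Local Open Scope complex_scope.
Variable R : realType.

Lemma has_nonneg_sups_complex : has_nonneg_sups R[i].
Proof.
move=> P b P0 Pb; pose Q := [set complex.Re v | v in P].
have Re_le (x y : R[i]) : x <= y -> complex.Re x <= complex.Re y.
  by rewrite lecE => /andP[].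
have Q_sup : has_sup Q.
  split; first by exists 0, 0.
  by exists (complex.Re b) => _ [v Pv <-]; apply: Re_le; have /andP[] := Pb v Pv.
exists (sup Q)%:C; split=> [v Pv|B PB].
  have /andP[v0 _] := Pb v Pv.
  by rewrite -(RRe_real (ger0_real v0)) lecR; apply: sup_upper_bound; last exists v.
rewrite -(RRe_real (ger0_real (PB 0 P0))) lecR; apply: ge_sup; first by exists 0, 0.
by move=> _ [v Pv <-]; apply/Re_le/PB.
Qed.

(* Each closed half circle is a continuous image of [-1, 1]: this is how the
   compactness of the unit circle enters, through the extreme value theorem. *)
Definition unit_arc (b : bool) (x : R) : R[i] :=
  let y := Num.sqrt (1 - x ^+ 2) in x +i* (if b then y else - y).

Lemma norm_unit_arc b x : -1 <= x <= 1 -> `|unit_arc b x| = 1.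
Proof.
move=> x1; have x2 : x ^+ 2 <= 1 by rewrite -ler_sqrt // sqrtr_sqr sqrtr1 ler_norml.
rewrite normc_def /= (_ : (if b then _ else _) ^+ 2 = 1 - x ^+ 2).
  by rewrite addrC subrK sqrtr1.
by case: b; rewrite ?sqrrN sqr_sqrtr // subr_ge0.
Qed.

Lemma unit_arcP (z : R[i]) : `|z| = 1 ->
  -1 <= complex.Re z <= 1 /\ exists b, z = unit_arc b (complex.Re z).
Proof.
case: z => x y; rewrite normc_def /= => -[] /(congr1 (fun t => t ^+ 2)).
rewrite sqr_sqrtr ?addr_ge0 ?sqr_ge0 // expr1n => xy.
have y2 : 1 - x ^+ 2 = y ^+ 2 by rewrite -xy addrC addKr.
split; first by apply/andP; split; nra.
exists (0 <= y); rewrite /unit_arc /= y2 sqrtr_sqr.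
by case: (lerP 0 y) => y0; [rewrite ger0_norm | rewrite ltr0_norm ?opprK].
Qed.

Lemma Re_normc_le (a b : R) : complex.Re `|a +i* b| <= `|a| + `|b|.
Proof.
rewrite normc_def /= -[X in _ <= X]ger0_norm ?addr_ge0 // -sqrtr_sqr.
apply: ler_wsqrtr.
rewrite sqrrD -(real_normK (num_real a)) -(real_normK (num_real b)).
by rewrite -addrA lerD2l lerDr mulrn_wge0 // mulr_ge0.
Qed.

Lemma Re_norm_unit_arcB b x y : complex.Re `|unit_arc b x - unit_arc b y| <=
  `|x - y| + `|Num.sqrt (1 - x ^+ 2) - Num.sqrt (1 - y ^+ 2)|.
Proof.
set sx := Num.sqrt _; set sy := Num.sqrt _.
have -> : unit_arc b x - unit_arc b y =
    (x - y) +i* (if b then sx - sy else - (sx - sy)).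
  by rewrite /unit_arc -/sx -/sy; case: b; simpc; rewrite // [- sx + sy]addrC.
by case: b; last rewrite -(normrN (sx - sy)); exact: Re_normc_le.
Qed.

Lemma continuous_unit_arc_comp (g : R[i] -> R) (l : R) b : 0 <= l ->
  (forall lam mu, g lam <= g mu + complex.Re `|lam - mu| * l) ->
  continuous (fun x => g (unit_arc b x)).
Proof.
move=> l0 g_lip y; apply/cvgrPdist_le => eps eps0.
pose del := eps / (2 * (l + 1)).
have del0 : 0 < del by rewrite divr_gt0 // mulr_gt0 // ltr_wpDl.
have delE : del * (2 * (l + 1)) = eps by rewrite divfK // gt_eqF // mulr_gt0 // ltr_wpDl.
have sqrt_cont : continuous (fun x : R => Num.sqrt (1 - x ^+ 2)).
  move=> x; apply: continuous_comp; last exact: sqrt_continuous.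
  by apply: cvgB; [exact: cvg_cst | exact: exprn_continuous].
have /cvgrPdist_le/(_ del del0) near_s := sqrt_cont y.
have /cvgrPdist_le/(_ del del0) near_x : (fun t : R => t) @ y --> y := cvg_id.
apply: filterS2 near_s near_x => t s_yt x_yt.
have D_le : complex.Re `|unit_arc b y - unit_arc b t| * l <= eps.
  have D_del := le_trans (Re_norm_unit_arcB b y t) (lerD x_yt s_yt).
  by rewrite -delE (le_trans (ler_wpM2r l0 D_del)) //; nra.
have := g_lip (unit_arc b y) (unit_arc b t).
have := g_lip (unit_arc b t) (unit_arc b y); rewrite distrC.
by rewrite ler_norml; lra.
Qed.

Lemma unit_sphere_sup_attained_complex : unit_sphere_sup_attained R[i].
Proof.
move=> f L M L0 M0 f_ge0 f_lip approx.
have realE (z : R[i]) : 0 <= z -> z = (complex.Re z)%:C.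
  by move=> z0; rewrite RRe_real ?ger0_real.
pose g lam := complex.Re (f lam).
have fE lam : f lam = (g lam)%:C by apply: realE.
have g_lip lam mu : g lam <= g mu + complex.Re `|lam - mu| * complex.Re L.
  have := f_lip lam mu; rewrite fE (fE mu) (realE _ L0) (realE `|lam - mu|) //.
  by rewrite -rmorphM -rmorphD lecR.
have arc_max b : exists2 x, -1 <= x <= 1 &
    forall y, -1 <= y <= 1 -> g (unit_arc b y) <= g (unit_arc b x).
  have [||x x1 x_max] := @EVT_max _ (fun x => g (unit_arc b x)) (-1) 1.
  - lra.
  - apply: continuous_subspaceT; apply: continuous_unit_arc_comp g_lip.
    by rewrite -lecR -realE.
  by exists x => [|y y1]; [move: x1 | apply: x_max]; rewrite in_itv.
have [x1 x1I x1_max] := arc_max true.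
have [x2 x2I x2_max] := arc_max false.
have [le1|lt1] := lerP (complex.Re M) (g (unit_arc true x1)).
  by exists (unit_arc true x1); rewrite ?norm_unit_arc // fE (realE M) ?lecR.
have [le2|lt2] := lerP (complex.Re M) (g (unit_arc false x2)).
  by exists (unit_arc false x2); rewrite ?norm_unit_arc // fE (realE M) ?lecR.
pose d := Num.min (complex.Re M - g (unit_arc true x1))
                  (complex.Re M - g (unit_arc false x2)).
have [d1 d2] : d <= complex.Re M - g (unit_arc true x1) /\
               d <= complex.Re M - g (unit_arc false x2).
  by rewrite !ge_min !lexx orbT.
have [|lam lam1] := approx d%:C; first by rewrite ltcR lt_min !subr_gt0 lt1 lt2.
rewrite fE (realE M) // -rmorphB ltcR.
have [lamI [b ->]] := unit_arcP lam1.
by case: b; [have := x1_max _ lamI | have := x2_max _ lamI]; lra.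
Qed.

End Complex.

Theorem corollary2p2 (R : realType) :
  cor2p2_over R /\ cor2p2_over R[i].
Proof.
split; apply: nice_embedding_Daugavet.
- exact: has_nonneg_sups_realType.
- exact: unit_sphere_sup_attained_realField.
- exact: has_nonneg_sups_complex.
- exact: unit_sphere_sup_attained_complex.
Qed.
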